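(* Let $R$ be a noetherian ring over a field $k$ and let $\mathcal{J}_1,\mathcal{J}_2\subset \mathrm{Gr}_{\mathbb{Q}}(R)$ be two $\mathbb{Q}$-Rees algebras over $R$. The following are equivalent: (1) $\mathcal{J}_1$ and $\mathcal{J}_2$ are equivalent, i.e. the Rees algebras $\mathcal{J}_1\cap R[T]$ and $\mathcal{J}_2\cap R[T]$ have the same integral closure in $R[T]$; (2) for some $b\in\mathbb{Q}_{>0}$, the algebras $\mathcal{J}_1\cap R[T^{b}]$ and $\mathcal{J}_2\cap R[T^{b}]$ have the same integral closure in $R[T^{b}]$; (3) for every $b\in\mathbb{Q}_{>0}$, the algebras $\mathcal{J}_1\cap R[T^{b}]$ and $\mathcal{J}_2\cap R[T^{b}]$ have the same integral closure in $R[T^{b}]$.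
   Context: Let $\mathbb{Q}_{\geq 0}$ be the nonnegative rationals and $\mathrm{Gr}_{\mathbb{Q}}(R)=\bigoplus_{a\in\mathbb{Q}_{\geq0}}RT^{a}$ (so $\mathrm{Gr}_{\mathbb{Q}}(R)=\bigcup_{N\ge1}R[T^{1/N}]$). A $\mathbb{Q}$-Rees algebra over $R$ is a graded subalgebra $\mathcal{J}=\bigoplus_{a\in\mathbb{Q}_{\ge0}}J_aT^a\subset \mathrm{Gr}_{\mathbb{Q}}(R)$, where the $J_a$ are ideals of $R$, such that: $J_0=R$; $J_aJ_b\subset J_{a+b}$ for all $a,b$; $J_b\subset J_a$ whenever $a\le b$; and there exist $f_1,\dots,f_r\in R$ and $a_1,\dots,a_r\in\mathbb{Q}_{\ge0}$ with $f_i\in J_{a_i}$ such that for every $a\in\mathbb{Q}_{\ge0}$ the ideal $J_a$ is generated by $\{f_{i_1}\cdots f_{i_\ell}\mid a_{i_1}+\dots+a_{i_\ell}\ge a\}$. *)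

From HB Require Import structures.
From mathcomp Require Import all_boot all_order all_algebra.
Set Implicit Arguments. Unset Strict Implicit. Unset Printing Implicit Defensive.
Import Order.TTheory GRing.Theory Num.Theory.
Local Open Scope ring_scope.

Section Defs.
Variable R : comNzRingType.

Definition ideal_gen (G : R -> Prop) (x : R) : Prop :=
  exists l : seq (R * R), (forall p, p \in l -> G p.2) /\
    x = \sum_(p <- l) p.1 * p.2.

Definition is_ideal (I : R -> Prop) : Prop :=
  [/\ I 0, (forall x y, I x -> I y -> I (x + y)) & (forall r x, I x -> I (r * x))].

Definition noetherian : Prop :=
  forall I : R -> Prop, is_ideal I ->
    exists s : seq R, forall x, I x <-> ideal_gen (fun g => g \in s) x.

(* A Q-Rees algebra  \bigoplus_{a in Q>=0} J_a T^a ; J a is only meaningful for a >= 0. *)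
Definition QRees (J : rat -> R -> Prop) : Prop :=
  [/\ (forall a, 0 <= a -> is_ideal (J a)),
      (forall x, J 0 x),
      (forall a b x y, 0 <= a -> 0 <= b -> J a x -> J b y -> J (a + b) (x * y)),
      (forall a b x, 0 <= a -> a <= b -> J b x -> J a x) &
      exists (r : nat) (f : 'I_r -> R) (e : 'I_r -> rat),
        [/\ (forall i, 0 <= e i), (forall i, J (e i) (f i)) &
            forall a, 0 <= a -> forall x, J a x <->
              ideal_gen (fun g => exists s : seq 'I_r,
                           a <= \sum_(i <- s) e i /\ g = \prod_(i <- s) f i) x]].

(* J ∩ R[T^b], viewed inside R[T^b] ≅ {poly R} via T^b |-> 'X:
   the polynomials  sum_n p_n X^n  with p_n in J_{n b}. *)
Definition Rees_slice (J : rat -> R -> Prop) (b : rat) (p : {poly R}) : Prop :=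
  forall n : nat, J (n%:R * b) p`_n.

Definition integral_over (S : {poly R} -> Prop) (q : {poly R}) : Prop :=
  exists P : {poly {poly R}}, P \is monic /\ (forall i, S P`_i) /\ P.[q] = 0.

Definition same_closure_at (J1 J2 : rat -> R -> Prop) (b : rat) : Prop :=
  forall q : {poly R},
    integral_over (Rees_slice J1 b) q <-> integral_over (Rees_slice J2 b) q.

Definition QRees_equiv (J1 J2 : rat -> R -> Prop) : Prop :=
  same_closure_at J1 J2 1.

End Defs.

From Pilot Require Import Defs.
From HB Require Import structures.
From mathcomp Require Import all_boot all_order all_algebra.
From Stdlib Require Import ClassicalDescription.
Import Order.TTheory GRing.Theory Num.Theory.
Set Implicit Arguments. Unset Strict Implicit. Unset Printing Implicit Defensive.
Local Open Scope ring_scope.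

(* Composition with T^m, i.e. [q |-> q \Po 'X^m], embeds J ∩ R[T^(m c)] into
   J ∩ R[T^c], and the latter is integral over the image: the m-th power of a
   monomial a T^(i c) with a in J_(i c) is a^m T^(i m c) with a^m in J_(i m c).
   Hence q is integral over J ∩ R[T^(m c)] iff q \Po 'X^m is integral over
   J ∩ R[T^c], so the integral closures agree at c iff they agree at m c.
   Since 1 and any b > 0 are both integer multiples of some 1/d, the three
   conditions coincide. *)

Section IntegralIn.
Variable K : comNzRingType.

Definition is_subring (S : K -> Prop) : Prop :=
  [/\ S 1, (forall x y, S x -> S y -> S (x - y)) &
      (forall x y, S x -> S y -> S (x * y))].

(* [integral_over] of [Defs] is the instance [K := {poly R}]. *)
Definition integral_in (S : K -> Prop) (x : K) : Prop :=
  exists P : {poly K}, P \is monic /\ (forall i, S P`_i) /\ P.[x] = 0.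

Lemma integral_in_sub (S1 S2 : K -> Prop) x :
  (forall y, S1 y -> S2 y) -> integral_in S1 x -> integral_in S2 x.
Proof. by move=> S12 [P [mP [S1P Px]]]; exists P; split=> //; split=> // i; apply: S12. Qed.

Lemma integral_in_exp (S : K -> Prop) x m :
  is_subring S -> (0 < m)%N -> S (x ^+ m) -> integral_in S x.
Proof.
case=> S1 SB _ m_gt0 Sxm; have S0 : S 0 by rewrite -(subrr 1); apply: SB.
exists ('X^m - (x ^+ m)%:P); split; first exact: monicXnsubC.
split; last by rewrite !hornerE subrr.
move=> i; rewrite coefB coefXn coefC.
have [->|_] := eqVneq i m; first by rewrite gtn_eqF // subr0.
case: (i == 0%N); last by rewrite subr0.
by apply: SB.
Qed.

Section Subring.
Variables (S : K -> Prop) (S_subring : is_subring S).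

(* A boolean copy of [S], so that [S] becomes a subtype of [K] and the
   integrality theory of [mxpoly] applies to its inclusion map. *)
Definition subring_mem : {pred K} :=
  fun x => if excluded_middle_informative (S x) then true else false.

Lemma subring_memP x : x \in subring_mem <-> S x.
Proof. by rewrite unfold_in /subring_mem; case: excluded_middle_informative. Qed.

Fact subring_mem_closed : subring_closed subring_mem.
Proof.
case: S_subring => S1 SB SM; split; first exact/subring_memP.
- by move=> x y /subring_memP Sx /subring_memP Sy; apply/subring_memP/SB.
- by move=> x y /subring_memP Sx /subring_memP Sy; apply/subring_memP/SM.
Qed.

HB.instance Definition _ :=
  GRing.isSubringClosed.Build K subring_mem subring_mem_closed.

Definition subring_type := {x : K | x \in subring_mem}.
HB.instance Definition _ := [isSub of subring_type for @sval K _].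
HB.instance Definition _ := [Choice of subring_type by <:].
HB.instance Definition _ := [SubChoice_isSubComNzRing of subring_type by <:].

Definition subring_val : {rmorphism subring_type -> K} := val.

Lemma integral_inE x : integral_in S x <-> integralOver subring_val x.
Proof.
split.
- case=> P [mP [SP Px]].
  pose Q := \poly_(i < size P) insubd (1 : subring_type) P`_i.
  have QP : map_poly subring_val Q = P.
    apply/polyP=> i; rewrite coef_map coef_poly.
    have [ltiP|leiP] /= := ltnP; last by rewrite nth_default.
    by rewrite insubdK //; apply/subring_memP.
  have val_inj : injective subring_val by apply: val_inj.
  exists Q; last by rewrite /root QP Px.
  rewrite monicE -(inj_eq val_inj) -(lead_coef_map_inj val_inj) ?rmorph0 //.
  by rewrite QP rmorph1 (monicP mP).
- case=> Q mQ rootQ; exists (map_poly subring_val Q).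
  split; first exact: monic_map.
  split; last exact/eqP.
  by move=> i; rewrite coef_map; apply/subring_memP; apply: valP.
Qed.

Lemma integral_in_mem y : S y -> integral_in S y.
Proof.
move=> Sy; apply/integral_inE.
have -> : y = subring_val (insubd 1 y) by rewrite /= insubdK //; apply/subring_memP.
exact: integral_id.
Qed.

Lemma integral_in_add x y :
  integral_in S x -> integral_in S y -> integral_in S (x + y).
Proof. by move=> /integral_inE Ix /integral_inE Iy; apply/integral_inE/integral_add. Qed.

Lemma integral_in_sum I (r : seq I) (F : I -> K) :
  (forall i, integral_in S (F i)) -> integral_in S (\sum_(i <- r) F i).
Proof.
move=> IF; apply: (big_ind (integral_in S)) => //; last exact: integral_in_add.
by apply/integral_inE; apply: integral0.
Qed.

Lemma integral_in_trans (S' : K -> Prop) x :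
  (forall y, S' y -> integral_in S y) -> integral_in S' x -> integral_in S x.
Proof.
move=> S'S [P [mP [S'P Px]]]; apply/integral_inE.
apply: (integral_root_monic mP); first by rewrite /root Px.
by move=> z /(nthP 0) [i _ <-]; apply/integral_inE/S'S.
Qed.

End Subring.
End IntegralIn.

Definition image_set (K L : Type) (f : K -> L) (S : K -> Prop) (y : L) : Prop :=
  exists2 x, S x & y = f x.

Section IntegralInImage.
Variables (K L : comNzRingType) (f : {rmorphism K -> L}).

Lemma is_subring_image S : is_subring S -> is_subring (image_set f S).
Proof.
case=> S1 SB SM; split; first by exists 1; rewrite ?rmorph1.
- by move=> _ _ [x Sx ->] [y Sy ->]; exists (x - y); rewrite ?rmorphB //; apply: SB.
- by move=> _ _ [x Sx ->] [y Sy ->]; exists (x * y); rewrite ?rmorphM //; apply: SM.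
Qed.

Lemma integral_in_image (S : K -> Prop) x :
  integral_in S x -> integral_in (image_set f S) (f x).
Proof.
case=> P [mP [SP Px]]; exists (map_poly f P); split; first exact: monic_map.
split; first by move=> i; rewrite coef_map; exists P`_i.
by rewrite horner_map Px rmorph0.
Qed.

Lemma integral_in_image_can (g : L -> K) (S : K -> Prop) x :
  cancel f g -> integral_in (image_set f S) (f x) -> integral_in S x.
Proof.
move=> fK [P [mP [SP Px]]]; have f_inj := can_inj fK.
have g0 : g 0 = 0 by rewrite -(rmorph0 f) fK.
have gP i : S (g P`_i) by have [s Ss ->] := SP i; rewrite fK.
pose Q := map_poly g P.
have QP : map_poly f Q = P.
  by apply/polyP=> i; rewrite coef_map coef_map_id0 //; have [s _ ->] := SP i; rewrite fK.
exists Q; split.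
  rewrite monicE -(inj_eq f_inj) -(lead_coef_map_inj f_inj) ?rmorph0 //.
  by rewrite QP rmorph1 (monicP mP).
split; first by move=> i; rewrite coef_map_id0.
by apply: f_inj; rewrite -horner_map QP Px rmorph0.
Qed.

End IntegralInImage.

Definition poly_contract (R : nzRingType) (m : nat) (p : {poly R}) : {poly R} :=
  \poly_(i < size p) p`_(i * m).

Lemma comp_poly_XnK (R : comNzRingType) m :
  (0 < m)%N -> cancel (comp_poly ('X^m : {poly R})) (poly_contract m).
Proof.
move=> m_gt0 p; apply/polyP=> i; rewrite coef_poly.
have pXm_im : (p \Po 'X^m)`_(i * m) = p`_i.
  by rewrite coef_comp_poly_Xn // dvdn_mull // mulnK.
case: ltnP => [_|le_size]; first by rewrite pXm_im.
by rewrite -pXm_im nth_default // (leq_trans le_size) // leq_pmulr.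
Qed.

Section QReesAlgebra.
Variables (R : comNzRingType) (J : rat -> R -> Prop).
Hypothesis J_QRees : QRees J.

Lemma QRees_ideal a : 0 <= a -> is_ideal (J a).
Proof. by case: J_QRees => + _ _ _ _; apply. Qed.

Lemma QRees0 a : 0 <= a -> J a 0.
Proof. by case/QRees_ideal. Qed.

Lemma QRees_add a x y : 0 <= a -> J a x -> J a y -> J a (x + y).
Proof. by case/QRees_ideal => _ + _; apply. Qed.

Lemma QRees_mull a r x : 0 <= a -> J a x -> J a (r * x).
Proof. by case/QRees_ideal => _ _; apply. Qed.

Lemma QRees_degree0 x : J 0 x.
Proof. by case: J_QRees => _ + _ _ _; apply. Qed.

Lemma QRees_mul a b x y :
  0 <= a -> 0 <= b -> J a x -> J b y -> J (a + b) (x * y).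
Proof. by case: J_QRees => _ _ + _ _; apply. Qed.

Lemma QRees_exp a x n : 0 <= a -> J a x -> J (n%:R * a) (x ^+ n).
Proof.
move=> a_ge0 Jx; elim: n => [|n IHn]; first by rewrite mul0r; apply: QRees_degree0.
rewrite exprSr -addn1 natrD mulrDl mul1r.
by apply: QRees_mul => //; apply: mulr_ge0.
Qed.

Lemma QRees_sum a I (r : seq I) (F : I -> R) :
  0 <= a -> (forall i, J a (F i)) -> J a (\sum_(i <- r) F i).
Proof.
move=> a_ge0 JF; apply: (big_ind (J a)) => //; first exact: QRees0.
by move=> x y; apply: QRees_add.
Qed.

Lemma is_subring_Rees_slice c : 0 <= c -> is_subring (Rees_slice J c).
Proof.
move=> c_ge0; have nc_ge0 n : 0 <= n%:R * c by apply: mulr_ge0.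
split.
- by case=> [|n]; rewrite coefC /= ?mul0r; [apply: QRees_degree0 | apply: QRees0].
- move=> x y Jx Jy n; rewrite coefB -mulN1r.
  by apply: QRees_add => //; apply: QRees_mull.
- move=> x y Jx Jy n; rewrite coefM; apply: QRees_sum => // -[i /=]; rewrite ltnS => le_in.
  by rewrite -(subnKC le_in) natrD mulrDl addKn; apply: QRees_mul.
Qed.

Section Rescaling.
Variables (c : rat) (m : nat).
Hypotheses (c_ge0 : 0 <= c) (m_gt0 : (0 < m)%N).

Let nc_ge0 n : 0 <= n%:R * c. Proof. exact: mulr_ge0. Qed.

Let comp_Xm := comp_poly ('X^m : {poly R}).

Lemma Rees_slice_comp_Xn s :
  Rees_slice J (m%:R * c) s -> Rees_slice J c (s \Po 'X^m).
Proof.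
move=> Js n; rewrite coef_comp_poly_Xn //.
case: ifP => [/dvdnP [k ->]|_]; last exact: QRees0.
by rewrite mulnK // natrM -mulrA; apply: Js.
Qed.

Lemma Rees_slice_monomial_exp a i :
  J (i%:R * c) a -> Rees_slice J (m%:R * c) (a ^+ m *: 'X^i).
Proof.
move=> Ja n; rewrite coefZ coefXn.
have [->|_] := eqVneq n i; last by rewrite mulr0; apply/QRees0/mulr_ge0.
by rewrite mulr1 mulrCA; apply: QRees_exp.
Qed.

Lemma Rees_slice_integral_comp_Xn y :
  Rees_slice J c y -> integral_in (image_set comp_Xm (Rees_slice J (m%:R * c))) y.
Proof.
move=> Jy; have Im_subring := is_subring_image comp_Xm
  (is_subring_Rees_slice (nc_ge0 m)).
rewrite -[y]coefK poly_def; apply: integral_in_sum => // i.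
apply: (integral_in_exp Im_subring m_gt0).
exists (y`_i ^+ m *: 'X^i); first exact: Rees_slice_monomial_exp.
by rewrite /comp_Xm /= exprZn comp_polyZ rmorphXn /= comp_polyX -!exprM mulnC.
Qed.

Lemma integral_Rees_slice_comp_Xn q :
  integral_over (Rees_slice J (m%:R * c)) q <->
  integral_over (Rees_slice J c) (q \Po 'X^m).
Proof.
split=> [Iq | IqXm].
- apply: (integral_in_sub (S1 := image_set comp_Xm (Rees_slice J (m%:R * c)))).
    by move=> _ [s Js ->]; apply: Rees_slice_comp_Xn.
  exact: integral_in_image.
- apply: (integral_in_image_can (comp_poly_XnK m_gt0)).
  apply: integral_in_trans IqXm; last exact: Rees_slice_integral_comp_Xn.
  exact: is_subring_image (is_subring_Rees_slice (nc_ge0 m)).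
Qed.

End Rescaling.

End QReesAlgebra.

Lemma rat_gt0_nat_frac (b : rat) : 0 < b ->
  exists n d : nat, [/\ (0 < n)%N, (0 < d)%N & b = n%:R / d%:R].
Proof.
move=> b_gt0; exists `|numq b|%N, `|denq b|%N.
rewrite !absz_gt0 numq_eq0 gt_eqF ?denq_neq0 //; split=> //.
by rewrite !natr_absz !gtr0_norm ?numq_gt0 ?denq_gt0 // divq_num_den.
Qed.

Section ReesClosure.
Variable R : comNzRingType.

Definition closure_le (Ja Jb : rat -> R -> Prop) (b : rat) : Prop :=
  forall q, integral_over (Rees_slice Ja b) q -> integral_over (Rees_slice Jb b) q.

Lemma closure_le_scale Ja Jb c m : QRees Ja -> QRees Jb -> 0 <= c -> (0 < m)%N ->
  closure_le Ja Jb c <-> closure_le Ja Jb (m%:R * c).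
Proof.
move=> Ja_QRees Jb_QRees c_ge0 m_gt0.
have comp_XmE := integral_Rees_slice_comp_Xn _ c_ge0 m_gt0.
split=> le_ab q.
  by move=> /(comp_XmE _ _ Ja_QRees)/le_ab/(comp_XmE _ _ Jb_QRees).
(* Over [J_a ∩ R[T^c]] we may pass to the image of [J_a ∩ R[T^(m c)]], whose
   elements are integral over [J_b ∩ R[T^(m c)]] by hypothesis. *)
move=> Iaq; have mc_ge0 : 0 <= m%:R * c by apply: mulr_ge0.
have Iaq_image := integral_in_trans (is_subring_image _
  (is_subring_Rees_slice Ja_QRees mc_ge0))
  (Rees_slice_integral_comp_Xn Ja_QRees c_ge0 m_gt0) Iaq.
apply: integral_in_trans Iaq_image; first exact: is_subring_Rees_slice.
move=> _ [s Jas ->]; apply/(comp_XmE _ _ Jb_QRees)/le_ab.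
exact: integral_in_mem (is_subring_Rees_slice Ja_QRees mc_ge0) _ Jas.
Qed.

Section SameClosure.
Variables (J1 J2 : rat -> R -> Prop).
Hypotheses (J1_QRees : QRees J1) (J2_QRees : QRees J2).

Lemma same_closure_at_scale c m : 0 <= c -> (0 < m)%N ->
  same_closure_at J1 J2 c <-> same_closure_at J1 J2 (m%:R * c).
Proof.
move=> c_ge0 m_gt0.
move: (closure_le_scale J1_QRees J2_QRees c_ge0 m_gt0).
move: (closure_le_scale J2_QRees J1_QRees c_ge0 m_gt0).
rewrite /closure_le /same_closure_at => -[le21 le21'] [le12 le12'].
split=> eq12 q; split;
  [apply: le12 | apply: le21 | apply: le12' | apply: le21'] => // {}q /eq12 //.
Qed.

Lemma same_closure_at_one b : 0 < b ->
  same_closure_at J1 J2 1 <-> same_closure_at J1 J2 b.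
Proof.
move=> /rat_gt0_nat_frac [n [d [n_gt0 d_gt0 ->]]].
have d_inv_ge0 : 0 <= (d%:R : rat)^-1 by rewrite invr_ge0 ler0n.
have one_d : (1 : rat) = d%:R / d%:R by rewrite divff // pnatr_eq0 -lt0n.
by rewrite [X in same_closure_at _ _ X <-> _]one_d -!same_closure_at_scale.
Qed.

End SameClosure.
End ReesClosure.

Theorem mainTheorem1 (k : fieldType) (R : comAlgType k)
    (hR : noetherian R) (J1 J2 : rat -> R -> Prop)
    (h1 : QRees J1) (h2 : QRees J2) :
  [<-> QRees_equiv J1 J2;
       exists2 b : rat, 0 < b & same_closure_at J1 J2 b;
       forall b : rat, 0 < b -> same_closure_at J1 J2 b].
Proof.
tfae.
- by move=> eq1; exists 1.
- move=> [b b_gt0 eqb] b' b'_gt0.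
  by apply/(same_closure_at_one h1 h2 b'_gt0)/(same_closure_at_one h1 h2 b_gt0).
- by move=> eqb; apply: eqb.
Qed.
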